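(* Let $n\ge \max\{m,p\}$ be positive integers, $A\in\mathbb{R}^{n\times n}$ and $E\in\mathbb{R}^{p\times p}$ symmetric positive definite, $B\in\mathbb{R}^{m\times n}$ of full row rank, $C\in\mathbb{R}^{p\times m}$ of full rank, $D\in\mathbb{R}^{m\times m}$ symmetric positive semidefinite, and $\widehat A,\widehat S,\widehat X$ symmetric positive definite of sizes $n,m,p$. Let $$\mathcal{A}=\begin{bmatrix}A&B^T&0\\ B&-D&C^T\\ 0&C&E\end{bmatrix},\qquad \mathcal{P}=\begin{bmatrix}\widehat A&B^T&0\\ 0&-\widehat S&C^T\\ 0&0&\widehat X\end{bmatrix}.$$ Set $\overline A=\widehat A^{-1/2}A\widehat A^{-1/2}$, $\overline D=\widehat S^{-1/2}D\widehat S^{-1/2}$, $\overline E=\widehat X^{-1/2}E\widehat X^{-1/2}$, $R=\widehat S^{-1/2}B\widehat A^{-1/2}$, $K=\widehat X^{-1/2}C\widehat S^{-1/2}$, $\widetilde S=D+B\widehat A^{-1}B^T$, $\widetilde X=E+C\widehat S^{-1}C^T$, and define $\gamma^A_{\min/\max}=\lambda_{\min/\max}(\widehat A^{-1}A)$, $\gamma^S_{\max}=\lambda_{\max}(\widehat S^{-1}\widetilde S)$, $\gamma^X_{\max}=\lambda_{\max}(\widehat X^{-1}\widetilde X)$, $\gamma^D_{\max}=\lambda_{\max}(\widehat S^{-1}D)$, $\gamma^E_{\min}=\lambda_{\min}(\widehat X^{-1}E)$, $\gamma^R_{\min}=\lambda_{\min}(RR^T)$. Assume $1\in[\gamma^A_{\min},\gamma^A_{\max}]$.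 Let $\lambda$ be a real eigenvalue of $\mathcal{A}\mathcal{P}^{-1}$ with $$\lambda\notin\left[\min\left\{\gamma^A_{\min},\frac{\gamma^R_{\min}}{\gamma^A_{\max}+\gamma^R_{\min}+\gamma^D_{\max}}\right\},\ \gamma^A_{\max}+\gamma^S_{\max}\right].$$ Then there are numbers $\gamma_A=q(\overline A,w_1)$, $\gamma_R=q(RR^T,w_2)$, $\gamma_D=q(\overline D,w_2)$, $\gamma_K=q(KK^T,w_3)$, $\gamma_E=q(\overline E,w_3)$ for some nonzero real vectors $w_1,w_2,w_3$ of appropriate sizes, such that, with $\gamma_S=\gamma_R+\gamma_D$ and $\gamma_X=\gamma_K+\gamma_E$, $\lambda$ satisfies $$\lambda^3-(\gamma_A+\gamma_S+\gamma_X)\lambda^2+(\gamma_A\gamma_X+\gamma_K+\gamma_E\gamma_S+\gamma_D\gamma_A+\gamma_R)\lambda-(\gamma_A\gamma_K+\gamma_E\gamma_A\gamma_D+\gamma_E\gamma_R)=0,$$ and moreover $$\min\left\{\gamma^E_{\min},\gamma^A_{\min},\frac{\gamma^R_{\min}}{\gamma^A_{\max}+\gamma^R_{\min}+\gamma^D_{\max}}\right\}\le\lambda\le\gamma^A_{\max}+\gamma^S_{\max}+\gamma^X_{\max}.$$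
   Context: For a square matrix $H$ and nonzero vector $w$, $q(H,w)=\frac{w^*Hw}{w^*w}$ is the Rayleigh quotient. $\lambda_{\min}$, $\lambda_{\max}$ denote smallest and largest eigenvalues. The assumption $1\in[\gamma^A_{\min},\gamma^A_{\max}]$ is a standing assumption of the paper's analysis. *)

From HB Require Import structures.
From mathcomp Require Import all_boot all_order all_algebra.
From mathcomp Require Import reals.
Set Implicit Arguments. Unset Strict Implicit. Unset Printing Implicit Defensive.
Import Order.TTheory GRing.Theory Num.Theory.
Local Open Scope ring_scope.

Section Defs.
Variable R : realType.

Definition spd (k : nat) (M : 'M[R]_k) : Prop :=
  M^T = M /\ forall x : 'cV[R]_k, x != 0 -> 0 < (x^T *m M *m x) 0 0.
Definition spsd (k : nat) (M : 'M[R]_k) : Prop :=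
  M^T = M /\ forall x : 'cV[R]_k, 0 <= (x^T *m M *m x) 0 0.

Definition is_inv_sqrt (k : nat) (M Y : 'M[R]_k) : Prop :=
  spd Y /\ Y *m Y = invmx M.

Definition rayleigh (k : nat) (H : 'M[R]_k) (w : 'cV[R]_k) : R :=
  (w^T *m H *m w) 0 0 / (w^T *m w) 0 0.

Definition is_lambda_min (k : nat) (M : 'M[R]_k) (l : R) : Prop :=
  eigenvalue M l /\ forall mu, eigenvalue M mu -> l <= mu.
Definition is_lambda_max (k : nat) (M : 'M[R]_k) (l : R) : Prop :=
  eigenvalue M l /\ forall mu, eigenvalue M mu -> mu <= l.

Definition calA (n m p : nat) (A : 'M[R]_n) (B : 'M[R]_(m, n)) (C : 'M[R]_(p, m))
  (D : 'M[R]_m) (E : 'M[R]_p) : 'M[R]_(n + m + p) :=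
  block_mx (block_mx A B^T B (- D)) (col_mx (0 : 'M[R]_(n, p)) C^T)
           (row_mx (0 : 'M[R]_(p, n)) C) E.

Definition calP (n m p : nat) (Ah : 'M[R]_n) (B : 'M[R]_(m, n)) (C : 'M[R]_(p, m))
  (Sh : 'M[R]_m) (Xh : 'M[R]_p) : 'M[R]_(n + m + p) :=
  block_mx (block_mx Ah B^T (0 : 'M[R]_(m, n)) (- Sh)) (col_mx (0 : 'M[R]_(n, p)) C^T)
           (0 : 'M[R]_(p, n + m)) Xh.

End Defs.

(* Write the eigenproblem of 𝒜𝒫⁻¹ as 𝒜y = λ𝒫y and rescale its three block components by
   Â^{-1/2}, Ŝ^{-1/2}, X̂^{-1/2}. Outside the excluded interval the shifted matrix M = Ā - λ and
   the Schur-type matrix N = λ - D̄ + (λ - 1) R M⁻¹ Rᵀ are definite, with opposite signs, so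
   the first two block rows can be solved for the first two components. A Rayleigh quotient
   of M⁻¹ is always the reciprocal of one of M (an isotropic vector of M - t lies between M⁻¹y
   and y), and likewise for N; substituting these into the third block row gives the cubic.
   Its coefficients are nonnegative, so its real roots are at most γ_A + γ_S + γ_X, and below
   the interval the sign of N forces γ_E ≤ λ. *)

From HB Require Import structures.
From mathcomp Require Import all_boot all_order all_algebra.
From mathcomp Require Import reals ring lra complex spectral.
Import Order.TTheory GRing.Theory Num.Theory.
Set Implicit Arguments. Unset Strict Implicit. Unset Printing Implicit Defensive.
Local Open Scope ring_scope.

Notation qform H x y := ((x^T *m H *m y) 0 0).
Notation dotv x y := ((x^T *m y) 0 0).

Lemma cV_neq0_exists (R : nzRingType) k : (0 < k)%N -> exists w : 'cV[R]_k, w != 0.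
Proof.
move=> k_gt0; exists (const_mx 1); apply/eqP => /matrixP /(_ (Ordinal k_gt0) 0).
by rewrite !mxE; apply/eqP/oner_neq0.
Qed.

Lemma unitmx_mul_eq0 (R : comUnitRingType) k l (H : 'M[R]_k) (y : 'M[R]_(k, l)) :
  H \in unitmx -> (H *m y == 0) = (y == 0).
Proof.
move=> H_unit; apply/eqP/eqP => [Hy0|->]; last exact: mulmx0.
by rewrite -(mulKmx H_unit y) Hy0 mulmx0.
Qed.

Lemma invmxN (R : comUnitRingType) k (A : 'M[R]_k) : invmx (- A) = - invmx A.
Proof.
have [A_unit|A_nunit] := boolP (A \in unitmx).
  by rewrite -scaleN1r invmxZ ?unitmxZ ?unitrN1 // invrN1 scaleN1r.
by rewrite !invmx_out // inE -scaleN1r unitmxZ ?unitrN1.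
Qed.

Lemma sym_congr (R : comNzRingType) k (Y H : 'M[R]_k) :
  Y^T = Y -> H^T = H -> (Y *m H *m Y)^T = Y *m H *m Y.
Proof. by move=> Y_sym H_sym; rewrite !trmx_mul Y_sym H_sym mulmxA. Qed.

Lemma sym_add_congr_inv (R : fieldType) k l (D : 'M[R]_k) (B : 'M[R]_(k, l)) (H : 'M[R]_l) :
  D^T = D -> H^T = H -> (D + B *m invmx H *m B^T)^T = D + B *m invmx H *m B^T.
Proof.
by move=> D_sym H_sym; rewrite linearD /= D_sym !trmx_mul trmxK trmx_inv H_sym mulmxA.
Qed.

Lemma tr_row_free_mul_eq0 (R : fieldType) k l (Y : 'M[R]_(k, l)) (w : 'cV[R]_k) :
  row_free Y -> (Y^T *m w == 0) = (w == 0).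
Proof. by move=> Y_free; rewrite -trmx_eq0 trmx_mul trmxK mulmx_free_eq0 // trmx_eq0. Qed.

Lemma row_free_unit_mul (R : fieldType) k l (Z : 'M[R]_k) (B : 'M[R]_(k, l)) (Y : 'M[R]_l) :
  Z \in unitmx -> Y \in unitmx -> row_free B -> row_free (Z *m B *m Y).
Proof.
move=> Z_unit Y_unit B_free; rewrite /row_free mxrankMfree ?row_free_unit //.
by rewrite (eqmxMfull _ _) ?row_full_unit.
Qed.

Lemma eigenvalue_mulmxC (F : fieldType) k (Y Z : 'M[F]_k) mu : Y \in unitmx ->
  eigenvalue (Z *m Y) mu -> eigenvalue (Y *m Z) mu.
Proof.
move=> Y_unit /eigenvalueP [v Hv v_neq0]; apply/eigenvalueP; exists (v *m invmx Y).
  by rewrite mulmxA mulmxKV // -[v *m Z](mulmxK Y_unit) -[v *m Z *m Y]mulmxA Hv -scalemxAl.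
by apply: contraNneq v_neq0 => v0; rewrite -(mulmxKV Y_unit v) v0 mul0mx.
Qed.

(* [eigenvalue] is witnessed by row eigenvectors; here we need a column one. *)
Lemma eigenvalue_mul_invmx (F : fieldType) k (A P : 'M[F]_k) l : P \in unitmx ->
  eigenvalue (A *m invmx P) l -> exists2 x : 'cV_k, x != 0 & A *m x = l *: (P *m x).
Proof.
move=> P_unit /eigenvalueP [v Hv v_neq0].
have vA : v *m A = l *: (v *m P).
  by rewrite -[v *m A](mulmxKV P_unit) -[v *m A *m _]mulmxA Hv -scalemxAl.
have : \det (A - l *: P)^T == 0.
  by rewrite det_tr; apply/det0P; exists v; rewrite // mulmxBr -scalemxAr vA subrr.
case/det0P => u u_neq0 Hu; exists u^T; first by rewrite trmx_eq0.
apply/eqP; rewrite -subr_eq0 scalemxAl -mulmxBl -trmx_eq0 trmx_mul trmxK.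
by rewrite Hu.
Qed.

Section QuadraticForms.
Variable R : realFieldType.

Lemma qformC k (G : 'M[R]_k) (x y : 'cV_k) : G^T = G -> qform G x y = qform G y x.
Proof.
move=> G_sym; transitivity ((x^T *m G *m y)^T 0 0); first by rewrite [RHS]mxE.
by rewrite !trmx_mul trmxK G_sym mulmxA.
Qed.

Lemma qformZ k (G : 'M[R]_k) (x : 'cV_k) c :
  qform G (c *: x) (c *: x) = c ^+ 2 * qform G x x.
Proof.
rewrite [(_ *: x)^T]linearZ /= -scalemxAr -!scalemxAl.
by move: (x^T *m G *m x) => M; rewrite !mxE mulrA -expr2.
Qed.

Lemma qform_line k (G : 'M[R]_k) (x z : 'cV_k) s : G^T = G ->
  qform G (x + s *: z) (x + s *: z)
    = qform G x x + 2 * s * qform G x z + s ^+ 2 * qform G z z.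
Proof.
move=> G_sym; rewrite [(x + _)^T]linearD /= [(s *: z)^T]linearZ /= !mulmxDl !mulmxDr.
rewrite -!scalemxAl -!scalemxAr.
by move: (qformC z x G_sym); rewrite !mxE => ->; ring.
Qed.

Lemma dotv_ge0 k (x : 'cV[R]_k) : 0 <= dotv x x.
Proof. by rewrite mxE sumr_ge0 // => i _; rewrite !mxE -expr2 sqr_ge0. Qed.

Lemma dotv_eq0 k (x : 'cV[R]_k) : (dotv x x == 0) = (x == 0).
Proof.
apply/idP/idP => [|/eqP ->]; last by rewrite mulmx0 mxE.
rewrite mxE psumr_eq0 => [/allP x0|i _]; last by rewrite !mxE -expr2 sqr_ge0.
apply/eqP/matrixP => i j; rewrite ord1 mxE.
by have /implyP/(_ isT) := x0 i (mem_index_enum i); rewrite !mxE -expr2 sqrf_eq0 => /eqP.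
Qed.

Lemma dotv_gt0 k (x : 'cV[R]_k) : x != 0 -> 0 < dotv x x.
Proof. by move=> x_neq0; rewrite lt_def dotv_eq0 x_neq0 dotv_ge0. Qed.

Lemma quadratic_ge0_discr (a b c : R) : 0 <= c ->
  (forall s, 0 <= a + 2 * s * b + s ^+ 2 * c) -> b ^+ 2 <= a * c.
Proof.
move=> c_ge0 q_ge0; have [c0|c_neq0] := eqVneq c 0.
  have [b0|b_neq0] := eqVneq b 0; first by rewrite b0 c0 expr0n mulr0.
  have := q_ge0 (- (a + 1) / (2 * b)); rewrite c0 mulr0 addr0.
  have -> : 2 * (- (a + 1) / (2 * b)) * b = - (a + 1) by field.
  lra.
have := q_ge0 (- b / c).
have -> : a + 2 * (- b / c) * b + (- b / c) ^+ 2 * c = a - b ^+ 2 / c by field.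
by rewrite subr_ge0 ler_pdivrMr // lt_def c_neq0.
Qed.

Lemma cauchy_schwarz k (G : 'M[R]_k) (x z : 'cV_k) :
  G^T = G -> (forall w : 'cV_k, 0 <= qform G w w) ->
  qform G x z ^+ 2 <= qform G x x * qform G z z.
Proof.
move=> G_sym G_psd; apply: quadratic_ge0_discr => // s.
by rewrite -qform_line.
Qed.

Lemma cauchy_schwarz_dotv k (x z : 'cV[R]_k) : dotv x z ^+ 2 <= dotv x x * dotv z z.
Proof.
have := @cauchy_schwarz k 1%:M x z (trmx1 _ _); rewrite !mulmx1.
by apply=> w; rewrite mulmx1 dotv_ge0.
Qed.

End QuadraticForms.

Section SpectralBound.
Local Open Scope sesquilinear_scope.

Lemma eigenvalue_spectral_diag (C : numClosedFieldType) n (A : 'M[C]_n) i :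
  A \is normalmx -> eigenvalue A (spectral_diag A 0 i).
Proof.
move=> /orthomx_spectralP A_eq; set P := spectralmx A in A_eq.
have P_unit : P \in unitmx := spectral_unit A.
apply/eigenvalueP; exists (row i P).
  by rewrite {1}A_eq rowE !mulmxA mulmxK // -[_ *m diag_mx _]rowE row_diag_mx -scalemxAl.
apply: contraNneq (oner_neq0 C) => /(congr1 (mulmx^~ (invmx P))).
rewrite rowE mulmxK // mul0mx => /matrixP /(_ 0 i).
by rewrite !mxE !eqxx => /eqP.
Qed.

Lemma hermitian_form_le (C : numClosedFieldType) n (A : 'M[C]_n) (t : C) :
  A \is hermsymmx -> (forall mu, eigenvalue A mu -> mu \is Num.real -> mu <= t) ->
  forall x : 'cV[C]_n, (x ^t* *m A *m x) 0 0 <= t * (x ^t* *m x) 0 0.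
Proof.
move=> A_herm A_le x; have A_normal := hermitian_normalmx A_herm.
have /orthomx_spectralP A_eq := A_normal.
have d_real := hermitian_spectral_diag_real A_herm.
set P := spectralmx A in A_eq; set d := spectral_diag A in A_eq d_real.
have P_unitary : P \is unitarymx := spectral_unitarymx A.
set y := P *m x.
have conj_y M : x ^t* *m (P ^t* *m M *m P) *m x = y ^t* *m M *m y.
  by rewrite /y trmx_mul map_mxM !mulmxA.
have -> : x ^t* *m x = y ^t* *m y.
  by rewrite -[y ^t*]mulmx1 -conj_y mulmx1 -invmx_unitary // mulVmx ?unitarymx_unit // mulmx1.
rewrite A_eq invmx_unitary // conj_y; clearbody y.
rewrite mul_mx_diag !mxE mulr_sumr.
apply: ler_sum => j _; rewrite !mxE mulrAC [t * _]mulrC ler_wpM2l //.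
  by rewrite mulrC mul_conjC_ge0.
by apply: A_le; [exact: eigenvalue_spectral_diag | exact: (mxOverP d_real)].
Qed.

Lemma symmetric_form_le (R : rcfType) n (H : 'M[R]_n) (t : R) :
  H^T = H -> (forall mu, eigenvalue H mu -> mu <= t) ->
  forall x : 'cV[R]_n, qform H x x <= t * dotv x x.
Proof.
move=> H_sym H_le x.
pose Hc := map_mx (real_complex R) H; pose xc := map_mx (real_complex R) x.
have Hc_herm : Hc \is hermsymmx.
  apply: realsym_hermsym.
    by apply/is_hermitianmxP; rewrite expr0 scale1r map_mx_id // /Hc map_trmx H_sym.
  by apply/mxOverP => i j; rewrite mxE; apply/complex_realP; exists (H i j).
have xc_adj : xc ^t* = map_mx (real_complex R) x^T.
  by apply/matrixP => i j; rewrite !mxE conj_Creal //; apply/complex_realP; eexists.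
have map_form M :
    (qform M x x)%:C%C = (xc ^t* *m map_mx (real_complex R) M *m xc) 0 0.
  by rewrite xc_adj /xc -!map_mxM [RHS]mxE.
have map_dot : (dotv x x)%:C%C = (xc ^t* *m xc) 0 0.
  by rewrite -[x^T]mulmx1 map_form map_mx1 mulmx1.
rewrite -lecR rmorphM /= map_form map_dot.
apply: (hermitian_form_le Hc_herm) => _ /[swap] /complex_realP [r ->].
by rewrite /Hc eigenvalue_map lecR => /H_le.
Qed.

End SpectralBound.

Section Isotropic.
Variable R : rcfType.

Lemma quadratic_root (a b c : R) : a < 0 -> 0 < c ->
  exists s, a + 2 * s * b + s ^+ 2 * c = 0.
Proof.
move=> a_lt0 c_gt0; have disc_ge0 : 0 <= b ^+ 2 - a * c by nra.
exists ((- b + Num.sqrt (b ^+ 2 - a * c)) / c).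
have := sqr_sqrtr disc_ge0; set r := Num.sqrt _ => r2.
apply: (mulfI (lt0r_neq0 c_gt0)); rewrite mulr0.
have -> : c * (a + 2 * ((- b + r) / c) * b + ((- b + r) / c) ^+ 2 * c)
  = c * a + 2 * (- b + r) * b + (- b + r) ^+ 2 by field; rewrite lt0r_neq0.
by rewrite sqrrD sqrrN r2; ring.
Qed.

Lemma isotropic_between k (G : 'M[R]_k) (x1 x2 : 'cV_k) :
  G^T = G -> x1 != 0 -> x2 != 0 -> qform G x1 x1 <= 0 -> 0 <= qform G x2 x2 ->
  exists2 w : 'cV_k, w != 0 & qform G w w = 0.
Proof.
move=> G_sym x1_neq0 x2_neq0; rewrite le_eqVlt => /predU1P[|q1_lt0]; first by exists x1.
rewrite le_eqVlt => /predU1P[|q2_gt0]; first by exists x2.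
have [s hs] := quadratic_root (qform G x1 x2) q1_lt0 q2_gt0.
exists (x1 + s *: x2); last by rewrite qform_line.
apply: contraTneq q1_lt0 => /eqP; rewrite addr_eq0 => /eqP ->.
by rewrite -scaleNr qformZ -leNgt mulr_ge0 ?sqr_ge0 // ltW.
Qed.

End Isotropic.

Section ScalarBounds.
Variable R : realFieldType.

Definition cubic_char (l gA gR gD gK gE : R) :=
  l ^+ 3 - (gA + (gR + gD) + (gK + gE)) * l ^+ 2
    + (gA * (gK + gE) + gK + gE * (gR + gD) + gD * gA + gR) * l
    - (gA * gK + gE * gA * gD + gE * gR).

Lemma shifted_schur_value_mul (l gA gR gD r : R) : (gA - l) * r = 1 ->
  (gA - l) * (l - gD + (l - 1) * (r * gR)) = (gA - l) * (l - gD) + (l - 1) * gR.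
Proof.
by move=> r_inv; rewrite mulrDr mulrCA [(gA - l) * (r * gR)]mulrA r_inv mul1r.
Qed.

Lemma cubic_char_root (l gA gR gD gK gE r q : R) :
  (gA - l) * r = 1 -> q = l - gD + (l - 1) * (r * gR) -> (l - 1) * gK = (l - gE) * q ->
  cubic_char l gA gR gD gK gE = 0.
Proof.
move=> r_inv q_def E_eq; have := shifted_schur_value_mul gR gD r_inv; rewrite -q_def => q_eq.
have -> : cubic_char l gA gR gD gK gE = (gA - l) * ((l - 1) * gK - (l - gE) * q)
  + (l - gE) * ((gA - l) * q - ((gA - l) * (l - gD) + (l - 1) * gR)) by rewrite /cubic_char; ring.
by rewrite E_eq q_eq !subrr !mulr0 addr0.
Qed.

Lemma cubic_char_root_le (l gA gR gD gK gE : R) :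
  0 <= gA -> 0 <= gR -> 0 <= gD -> 0 <= gK -> 0 <= gE ->
  cubic_char l gA gR gD gK gE = 0 -> l <= gA + (gR + gD) + (gK + gE).
Proof.
move=> hA hR hD hK hE; set s1 := _ + _ + _ => root; rewrite leNgt; apply/negP => s1_lt.
pose t := gA * gK + gA * gE + gE * gR + gE * gD + gD * gA.
pose s2 := gK + gR + t; pose s3 := gA * gK + gE * gA * gD + gE * gR.
have s3_le : s3 <= s1 * s2.
  have DA_le : gD * gA <= t by rewrite /t; nra.
  have EDA_le : gE * (gD * gA) <= s1 * t.
    by apply: ler_pM => //; [exact: mulr_ge0 | rewrite /s1; lra].
  have AK_ER_le : gA * gK + gE * gR <= s1 * gK + s1 * gR.
    by apply: lerD; apply: ler_wpM2r => //; rewrite /s1; lra.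
  by rewrite /s3 /s2 mulrDr; lra.
(* A root beyond the trace s1 would make both parts of the cubic positive. *)
have : 0 < l ^+ 2 * (l - s1) + (s2 * l - s3).
  have s2_ge0 : 0 <= s2 by rewrite /s2 /t; nra.
  have s2_le : s2 * s1 <= s2 * l by rewrite ler_wpM2l // ltW.
  have l_gt0 : 0 < l by apply: le_lt_trans s1_lt; rewrite /s1; lra.
  have : 0 < l ^+ 2 * (l - s1) by rewrite mulr_gt0 ?exprn_gt0 ?subr_gt0.
  lra.
suff -> : l ^+ 2 * (l - s1) + (s2 * l - s3) = cubic_char l gA gR gD gK gE by rewrite root ltxx.
by rewrite /cubic_char /s1 /s2 /s3 /t; ring.
Qed.

Lemma shifted_schur_value_lt0 (gAmin gAmax gRmin gDmax gA gR gD l r : R) :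
  gAmin <= gA <= gAmax -> gRmin <= gR -> 0 <= gR -> 0 <= gD <= gDmax -> gAmin <= 1 ->
  l < gAmin -> l * (gAmax + gRmin + gDmax) < gRmin -> (gA - l) * r = 1 ->
  l - gD + (l - 1) * (r * gR) < 0.
Proof.
move=> /andP[gA_ge gA_le] gR_ge gR_ge0 /andP[gD_ge0 gD_le] gAmin_le1 l_lt l_rho r_inv.
have gAl_gt0 : 0 < gA - l by lra.
rewrite -(pmulr_rlt0 _ gAl_gt0) shifted_schur_value_mul //.
have AD_le : (gA - l) * (l - gD) <= (gA - l) * l by apply: ler_wpM2l; lra.
have R_le0 : (l - 1) * gR <= 0 by rewrite mulr_le0_ge0 //; lra.
have [l_lt0|l_gt0|l0] := ltgtP l 0; last first.
- by move: AD_le l_rho; rewrite l0 mulr0 mul0r; lra.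
- have : (gA - l) * l <= (gAmax - l) * l by apply: ler_wpM2r; lra.
  have : (1 - l) * gRmin <= (1 - l) * gR by apply: ler_wpM2l; lra.
  have : 0 <= l * gDmax by apply: mulr_ge0; lra.
  nra.
have : (gA - l) * l < 0 by rewrite pmulr_rlt0.
lra.
Qed.

Lemma shifted_schur_value_gt0 (gAmax gSmax gA gR gD l r : R) :
  gA <= gAmax -> 1 <= gAmax -> 0 <= gR -> 0 <= gD -> gR + gD <= gSmax ->
  gAmax + gSmax < l -> (gA - l) * r = 1 -> 0 < l - gD + (l - 1) * (r * gR).
Proof.
move=> gA_le gAmax_ge1 gR_ge0 gD_ge0 gS_ge l_gt r_inv.
have gAl_lt0 : gA - l < 0 by lra.
rewrite -(nmulr_rlt0 _ gAl_lt0) shifted_schur_value_mul //.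
nra.
Qed.

End ScalarBounds.

Section Rayleigh.
Variable R : realType.

Lemma qform_rayleigh k (H : 'M[R]_k) (w : 'cV_k) :
  w != 0 -> qform H w w = rayleigh H w * dotv w w.
Proof. by move=> w_neq0; rewrite divfK // lt0r_neq0 // dotv_gt0. Qed.

Lemma rayleigh0 k (H : 'M[R]_k) : rayleigh H 0 = 0.
Proof. by rewrite /rayleigh mulmx0 mxE mul0r. Qed.

Lemma rayleighD k (H G : 'M[R]_k) w : rayleigh (H + G) w = rayleigh H w + rayleigh G w.
Proof. by rewrite /rayleigh mulmxDr mulmxDl mxE mulrDl. Qed.

Lemma rayleighN k (H : 'M[R]_k) w : rayleigh (- H) w = - rayleigh H w.
Proof. by rewrite /rayleigh mulmxN mulNmx mxE mulNr. Qed.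

Lemma rayleighZ k a (H : 'M[R]_k) w : rayleigh (a *: H) w = a * rayleigh H w.
Proof. by rewrite /rayleigh -scalemxAr -scalemxAl mxE mulrA. Qed.

Lemma rayleigh_scalar k a (w : 'cV[R]_k) : w != 0 -> rayleigh a%:M w = a.
Proof.
move=> w_neq0; rewrite /rayleigh mul_mx_scalar -scalemxAl mxE mulfK //.
by rewrite lt0r_neq0 // dotv_gt0.
Qed.

Lemma rayleigh_shift k (H : 'M[R]_k) l (w : 'cV_k) :
  w != 0 -> rayleigh (H - l%:M) w = rayleigh H w - l.
Proof. by move=> w_neq0; rewrite rayleighD rayleighN rayleigh_scalar. Qed.

(* Unconditional thanks to [x / 0 = 0]: both sides vanish when [Y^T *m w = 0]. *)
Lemma rayleigh_congr k l (Y : 'M[R]_(k, l)) (G : 'M[R]_l) (w : 'cV_k) :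
  rayleigh (Y *m G *m Y^T) w = rayleigh G (Y^T *m w) * rayleigh (Y *m Y^T) w.
Proof.
have congr_form (H : 'M_l) : qform (Y *m H *m Y^T) w w = qform H (Y^T *m w) (Y^T *m w).
  by rewrite trmx_mul trmxK !mulmxA.
have -> : Y *m Y^T = Y *m 1%:M *m Y^T by rewrite mulmx1.
rewrite /rayleigh !congr_form mulmx1.
have [->|Yw_neq0] := eqVneq (Y^T *m w) 0; first by rewrite mulmx0 mxE !mul0r.
by rewrite mulrA divfK // lt0r_neq0 // dotv_gt0.
Qed.

Lemma rayleigh_le_eigen k (H : 'M[R]_k) t (w : 'cV_k) : H^T = H ->
  (forall mu, eigenvalue H mu -> mu <= t) -> w != 0 -> rayleigh H w <= t.
Proof. by move=> H_sym H_le w_neq0; rewrite ler_pdivrMr ?dotv_gt0 ?symmetric_form_le. Qed.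

Lemma rayleigh_ge_eigen k (H : 'M[R]_k) t (w : 'cV_k) : H^T = H ->
  (forall mu, eigenvalue H mu -> t <= mu) -> w != 0 -> t <= rayleigh H w.
Proof.
move=> H_sym H_ge w_neq0; rewrite -lerN2 -rayleighN.
apply: rayleigh_le_eigen => [|mu /eigenvalueP [v Hv v_neq0]|//].
  by rewrite linearN /= H_sym.
rewrite lerNr; apply: H_ge; apply/eigenvalueP; exists v => //.
by rewrite scaleNr -Hv mulmxN opprK.
Qed.

Lemma spd_rayleigh_gt0 k (H : 'M[R]_k) (w : 'cV_k) : spd H -> w != 0 -> 0 < rayleigh H w.
Proof. by move=> [_ H_pos] w_neq0; rewrite divr_gt0 ?H_pos ?dotv_gt0. Qed.

Lemma spd_rayleigh k (H : 'M[R]_k) :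
  H^T = H -> (forall w : 'cV_k, w != 0 -> 0 < rayleigh H w) -> spd H.
Proof.
move=> H_sym H_pos; split=> // w w_neq0.
by rewrite qform_rayleigh // mulr_gt0 ?H_pos ?dotv_gt0.
Qed.

Lemma spd_qform_ge0 k (H : 'M[R]_k) (x : 'cV_k) : spd H -> 0 <= qform H x x.
Proof.
by case=> _ H_pos; have [->|/H_pos/ltW//] := eqVneq x 0; rewrite mulmx0 mxE.
Qed.

Lemma spd_rayleigh_ge0 k (H : 'M[R]_k) (w : 'cV_k) : spd H -> 0 <= rayleigh H w.
Proof. by move=> H_spd; rewrite divr_ge0 ?dotv_ge0 ?spd_qform_ge0. Qed.

Lemma rayleigh_gram_ge0 k l (Y : 'M[R]_(k, l)) (w : 'cV_k) : 0 <= rayleigh (Y *m Y^T) w.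
Proof.
rewrite /rayleigh; have -> : w^T *m (Y *m Y^T) *m w = (Y^T *m w)^T *m (Y^T *m w).
  by rewrite trmx_mul trmxK !mulmxA.
by rewrite divr_ge0 ?dotv_ge0.
Qed.

Lemma spd_unit k (H : 'M[R]_k) : spd H -> H \in unitmx.
Proof.
case=> _ H_pos; rewrite unitmxE unitfE; apply/negP => /det0P [v v_neq0 vH].
by have := H_pos v^T; rewrite trmxK vH mul0mx mxE ltxx trmx_eq0 => /(_ v_neq0).
Qed.

Lemma qform_invmx k (H : 'M[R]_k) (y : 'cV_k) : H^T = H -> H \in unitmx ->
  qform H (invmx H *m y) (invmx H *m y) = qform (invmx H) y y.
Proof. by move=> H_sym H_unit; rewrite trmx_mul trmx_inv H_sym mulmxKV // mulmxA. Qed.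

Lemma spd_inv k (H : 'M[R]_k) : spd H -> spd (invmx H).
Proof.
move=> H_spd; have [H_sym H_pos] := H_spd; have H_unit := spd_unit H_spd.
split=> [|y y_neq0]; first by rewrite trmx_inv H_sym.
by rewrite -qform_invmx // H_pos // unitmx_mul_eq0 ?unitmx_inv.
Qed.

Lemma rayleigh_inv_spd k (H : 'M[R]_k) (y : 'cV_k) : spd H -> y != 0 ->
  exists2 w : 'cV_k, w != 0 & rayleigh H w * rayleigh (invmx H) y = 1.
Proof.
move=> H_spd y_neq0; have [H_sym H_pos] := H_spd; have H_unit := spd_unit H_spd.
pose u := invmx H *m y; pose q := qform (invmx H) y y.
have u_neq0 : u != 0 by rewrite unitmx_mul_eq0 ?unitmx_inv.
have q_gt0 : 0 < q by rewrite /q -qform_invmx // H_pos.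
have q_dot : q = dotv y u by rewrite mulmxA.
have Huy : qform H u y = dotv y y by rewrite trmx_mul trmx_inv H_sym mulmxKV.
(* [t] is the reciprocal of [rayleigh (invmx H) y]; by Cauchy-Schwarz, [u] and [y] lie on
   opposite sides of the isotropic cone of [H - t], which therefore contains some [w]. *)
pose t := dotv y y / q.
have shift_form (x : 'cV_k) : qform (H - t%:M) x x = qform H x x - t * dotv x x.
  by rewrite mulmxBr mulmxBl mul_mx_scalar -scalemxAl !mxE.
have [w w_neq0] : exists2 w : 'cV_k, w != 0 & qform (H - t%:M) w w = 0.
  apply: (isotropic_between _ u_neq0 y_neq0).
- by rewrite linearB /= tr_scalar_mx H_sym.
- rewrite shift_form qform_invmx // -/q subr_le0 /t mulrAC ler_pdivlMr // -expr2 q_dot.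
  exact: cauchy_schwarz_dotv.
- rewrite shift_form subr_ge0 /t mulrAC ler_pdivrMr // -expr2 -Huy mulrC /q -qform_invmx //.
  by apply: cauchy_schwarz => // x; apply: spd_qform_ge0.
rewrite shift_form => /eqP; rewrite subr_eq0 => /eqP Hw.
have dy_neq0 : dotv y y != 0 by rewrite lt0r_neq0 ?dotv_gt0.
exists w => //; rewrite /rayleigh Hw mulfK ?lt0r_neq0 ?dotv_gt0 // /t -/q.
by rewrite mulrA divfK ?divff // lt0r_neq0.
Qed.

Lemma eq_rayleigh k (H G : 'M[R]_k) (w : 'cV_k) :
  H *m w = G *m w -> rayleigh H w = rayleigh G w.
Proof. by move=> HG; rewrite /rayleigh -!mulmxA HG. Qed.

Definition definite k (H : 'M[R]_k) := spd H \/ spd (- H).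

Lemma definite_unit k (H : 'M[R]_k) : definite H -> H \in unitmx.
Proof. by case=> /spd_unit //; rewrite -scaleN1r unitmxZ ?unitrN1. Qed.

Lemma rayleigh_inv k (H : 'M[R]_k) (y : 'cV_k) : definite H -> y != 0 ->
  exists2 w : 'cV_k, w != 0 & rayleigh H w * rayleigh (invmx H) y = 1.
Proof.
case=> H_spd y_neq0; first exact: rayleigh_inv_spd.
have [w w_neq0] := rayleigh_inv_spd H_spd y_neq0.
by rewrite invmxN !rayleighN mulrNN; exists w.
Qed.

Lemma spd_congr k (Y H : 'M[R]_k) : Y^T = Y -> Y \in unitmx -> spd H -> spd (Y *m H *m Y).
Proof.
move=> Y_sym Y_unit [H_sym H_pos]; split=> [|w w_neq0]; first exact: sym_congr.
have -> : w^T *m (Y *m H *m Y) *m w = (Y *m w)^T *m H *m (Y *m w).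
  by rewrite trmx_mul Y_sym !mulmxA.
by rewrite H_pos ?unitmx_mul_eq0.
Qed.

Lemma spsd_congr_rayleigh_ge0 k (Y H : 'M[R]_k) (w : 'cV_k) :
  Y^T = Y -> spsd H -> 0 <= rayleigh (Y *m H *m Y) w.
Proof.
move=> Y_sym [_ H_psd]; rewrite divr_ge0 ?dotv_ge0 //.
have -> : w^T *m (Y *m H *m Y) *m w = (Y *m w)^T *m H *m (Y *m w).
  by rewrite trmx_mul Y_sym !mulmxA.
exact: H_psd.
Qed.

Lemma eigenvalue_gram_ge0 k l (Y : 'M[R]_(k, l)) mu : eigenvalue (Y *m Y^T) mu -> 0 <= mu.
Proof.
case/eigenvalueP => v Hv v_neq0; have vt_neq0 : v^T != 0 by rewrite trmx_eq0.
suff <- : rayleigh (Y *m Y^T) v^T = mu by apply: rayleigh_gram_ge0.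
have := dotv_gt0 vt_neq0; rewrite trmxK => vv_gt0.
by rewrite /rayleigh trmxK Hv -scalemxAl [in X in X / _]mxE mulfK // lt0r_neq0.
Qed.

End Rayleigh.

Section InvSqrt.
Variable R : realType.
Variables (k : nat) (H Y : 'M[R]_k).
Hypothesis HY : is_inv_sqrt H Y.

Lemma inv_sqrtP : [/\ Y^T = Y, Y \in unitmx, H \in unitmx & Y *m H *m Y = 1%:M].
Proof.
have [[Y_sym _] YY] := HY; have Y_unit := spd_unit HY.1.
have H_unit : H \in unitmx by rewrite -unitmx_inv -YY unitmx_mul Y_unit.
split=> //; have YH : Y *m H = invmx Y.
  rewrite -[Y *m H]mul1mx -(mulVmx Y_unit) -mulmxA [Y *m (Y *m H)]mulmxA YY.
  by rewrite mulVmx // mulmx1.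
by rewrite YH mulVmx.
Qed.

Lemma inv_sqrt_eigenvalue (Mx : 'M[R]_k) mu :
  eigenvalue (Y *m Mx *m Y) mu -> eigenvalue (invmx H *m Mx) mu.
Proof.
have [_ Y_unit _ _] := inv_sqrtP.
by rewrite -HY.2 -[Y *m Y *m Mx]mulmxA; apply: eigenvalue_mulmxC.
Qed.

Lemma inv_sqrt_rayleigh_le (Mx : 'M[R]_k) t (w : 'cV_k) : Mx^T = Mx ->
  is_lambda_max (invmx H *m Mx) t -> w != 0 -> rayleigh (Y *m Mx *m Y) w <= t.
Proof.
have [Y_sym _ _ _] := inv_sqrtP => Mx_sym [_ t_max].
by apply: rayleigh_le_eigen; [exact: sym_congr | move=> mu /inv_sqrt_eigenvalue/t_max].
Qed.

Lemma inv_sqrt_rayleigh_ge (Mx : 'M[R]_k) t (w : 'cV_k) : Mx^T = Mx ->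
  is_lambda_min (invmx H *m Mx) t -> w != 0 -> t <= rayleigh (Y *m Mx *m Y) w.
Proof.
have [Y_sym _ _ _] := inv_sqrtP => Mx_sym [_ t_min].
by apply: rayleigh_ge_eigen; [exact: sym_congr | move=> mu /inv_sqrt_eigenvalue/t_min].
Qed.

Lemma inv_sqrt_gram l (Z : 'M[R]_l) (B : 'M[R]_(l, k)) : Z^T = Z ->
  (Z *m B *m Y) *m (Z *m B *m Y)^T = Z *m (B *m invmx H *m B^T) *m Z.
Proof.
have [Y_sym _ _ _] := inv_sqrtP => Z_sym.
by rewrite !trmx_mul Y_sym Z_sym -HY.2 !mulmxA.
Qed.

End InvSqrt.

Lemma inv_sqrt_schur_rayleigh_le (R : realType) k l (H Y : 'M[R]_k) (G Z D : 'M[R]_l)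
    (B : 'M[R]_(l, k)) t (w : 'cV_l) :
  is_inv_sqrt G Z -> is_inv_sqrt H Y -> H^T = H -> D^T = D ->
  is_lambda_max (invmx G *m (D + B *m invmx H *m B^T)) t -> w != 0 ->
  rayleigh (Z *m D *m Z + (Z *m B *m Y) *m (Z *m B *m Y)^T) w <= t.
Proof.
move=> GZ HY H_sym D_sym t_max; have [Z_sym _ _ _] := inv_sqrtP GZ.
rewrite (inv_sqrt_gram HY) // -mulmxDl -mulmxDr.
apply: (inv_sqrt_rayleigh_le GZ) t_max.
exact: sym_add_congr_inv.
Qed.

Section ShiftedSchur.
Variable R : realType.

(* Eliminating the first block component from the scaled system turns its second block row
   into [shifted_schur Ab Rm Db l *m b = (l - 1) *: (Km^T *m c)]; see [shifted_b]. *)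
Definition shifted_schur k1 k2 (Ab : 'M[R]_k1) (Rm : 'M[R]_(k2, k1)) (Db : 'M[R]_k2) l :=
  l%:M - Db + (l - 1) *: (Rm *m invmx (Ab - l%:M) *m Rm^T).

Variables (k1 k2 : nat) (Ab : 'M[R]_k1) (Rm : 'M[R]_(k2, k1)) (Db : 'M[R]_k2) (l : R).

Lemma shifted_schur_sym :
  Ab^T = Ab -> Db^T = Db -> (shifted_schur Ab Rm Db l)^T = shifted_schur Ab Rm Db l.
Proof.
move=> Ab_sym Db_sym; rewrite /shifted_schur linearD linearB linearZ /= tr_scalar_mx Db_sym.
by rewrite !trmx_mul trmxK trmx_inv linearB /= tr_scalar_mx Ab_sym mulmxA.
Qed.

Lemma rayleigh_shifted_schur (w : 'cV_k2) : w != 0 ->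
  rayleigh (shifted_schur Ab Rm Db l) w = l - rayleigh Db w
    + (l - 1) * (rayleigh (invmx (Ab - l%:M)) (Rm^T *m w) * rayleigh (Rm *m Rm^T) w).
Proof.
by move=> w_neq0; rewrite !rayleighD rayleighN rayleighZ rayleigh_scalar // rayleigh_congr.
Qed.

End ShiftedSchur.

Section ShiftedSystem.
Variable R : realType.
Variables (k1 k2 k3 : nat) (Ab : 'M[R]_k1) (Rm : 'M[R]_(k2, k1)) (Db : 'M[R]_k2).
Variables (Km : 'M[R]_(k3, k2)) (Eb : 'M[R]_k3) (l : R).
Variables (a : 'cV[R]_k1) (b : 'cV[R]_k2) (c : 'cV[R]_k3).
Local Notation M := (Ab - l%:M).
Local Notation N := (shifted_schur Ab Rm Db l).
Hypotheses (M_def : definite M) (N_def : definite N).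
Hypotheses (k2_gt0 : (0 < k2)%N) (Rm_free : row_free Rm).
Hypothesis eq_a : Ab *m a + Rm^T *m b = l *: (a + Rm^T *m b).
Hypothesis eq_b : Rm *m a - Db *m b + Km^T *m c = l *: (- b + Km^T *m c).
Hypothesis eq_c : Km *m b + Eb *m c = l *: c.
Hypothesis abc_neq0 : (a != 0) || (b != 0) || (c != 0).

Lemma shifted_a : a = (l - 1) *: (invmx M *m (Rm^T *m b)).
Proof.
have Ma : M *m a = (l - 1) *: (Rm^T *m b).
  apply/matrixP => i j; move/matrixP/(_ i j): eq_a.
  by rewrite mulmxBl mul_scalar_mx !mxE; lra.
by rewrite scalemxAr -Ma mulKmx // definite_unit.
Qed.

Lemma shifted_b : b = (l - 1) *: (invmx N *m (Km^T *m c)).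
Proof.
have Ra : Rm *m a = (l - 1) *: (Rm *m invmx M *m Rm^T *m b).
  by rewrite {1}shifted_a -scalemxAr !mulmxA.
have Nb : N *m b = (l - 1) *: (Km^T *m c).
  rewrite /shifted_schur !mulmxDl mulNmx mul_scalar_mx -scalemxAl -Ra.
  apply/matrixP => i j; move/matrixP/(_ i j): eq_b.
  by rewrite !mxE; lra.
by rewrite scalemxAr -Nb mulKmx // definite_unit.
Qed.

Lemma shifted_c_neq0 : c != 0.
Proof.
apply: contraTneq abc_neq0 => c0; have b0 : b = 0 by rewrite shifted_b c0 !mulmx0 scaler0.
by rewrite shifted_a b0 c0 !mulmx0 scaler0 !eqxx.
Qed.

Lemma rayleigh_shifted_E : (l - 1) * rayleigh (Km *m invmx N *m Km^T) c = l - rayleigh Eb c.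
Proof.
rewrite -rayleighZ -[l in RHS](rayleigh_scalar l shifted_c_neq0) -rayleighN -rayleighD.
apply: eq_rayleigh; rewrite -scalemxAl -!mulmxA scalemxAr -shifted_b mulmxBl mul_scalar_mx.
by rewrite -eq_c addrK.
Qed.

Lemma shifted_cubic_root : exists w1 w2, [/\ w1 != 0, w2 != 0 &
  cubic_char l (rayleigh Ab w1) (rayleigh (Rm *m Rm^T) w2) (rayleigh Db w2)
    (rayleigh (Km *m Km^T) c) (rayleigh Eb c) = 0].
Proof.
have KK_congr : Km *m Km^T = Km *m 1%:M *m Km^T by rewrite mulmx1.
have [w2 w2_neq0 E_eq] : exists2 w2 : 'cV_k2, w2 != 0 &
    (l - 1) * rayleigh (Km *m Km^T) c = (l - rayleigh Eb c) * rayleigh N w2.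
  rewrite -rayleigh_shifted_E rayleigh_congr KK_congr rayleigh_congr.
  have [g0|g_neq0] := eqVneq (Km^T *m c) 0.
    have [w2 w2_neq0] := cV_neq0_exists R k2_gt0.
    by exists w2; rewrite // g0 !rayleigh0 !(mulr0, mul0r).
  have [w2 w2_neq0 w2_inv] := rayleigh_inv N_def g_neq0.
  by exists w2; rewrite // -[LHS]mulr1 -w2_inv; ring.
have z_neq0 : Rm^T *m w2 != 0 by rewrite tr_row_free_mul_eq0.
have [w1 w1_neq0 w1_inv] := rayleigh_inv M_def z_neq0.
exists w1, w2; split=> //; apply: cubic_char_root E_eq.
- by rewrite -w1_inv rayleigh_shift.
- exact: rayleigh_shifted_schur.
Qed.

Lemma shifted_E_le : spd (- N) -> l < 1 -> rayleigh Eb c <= l.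
Proof.
move=> N_neg l_lt1; rewrite -subr_ge0 -rayleigh_shifted_E mulr_le0 ?subr_le0 ?(ltW l_lt1) //.
rewrite rayleigh_congr mulr_le0_ge0 ?rayleigh_gram_ge0 //.
by rewrite -oppr_ge0 -rayleighN -invmxN; apply/spd_rayleigh_ge0/spd_inv.
Qed.

End ShiftedSystem.

Section ScaledProblem.
Variable R : realType.
Variables (k1 k2 k3 : nat) (Ab : 'M[R]_k1) (Rm : 'M[R]_(k2, k1)) (Db : 'M[R]_k2).
Variables (Km : 'M[R]_(k3, k2)) (Eb : 'M[R]_k3).
Variables (gAmin gAmax gSmax gXmax gDmax gEmin gRmin : R).
Hypotheses (Ab_spd : spd Ab) (Eb_spd : spd Eb) (Db_sym : Db^T = Db).
Hypotheses (k2_gt0 : (0 < k2)%N) (Rm_free : row_free Rm).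
Hypothesis Ab_bounds : forall w : 'cV_k1, w != 0 -> gAmin <= rayleigh Ab w <= gAmax.
Hypothesis Db_bounds : forall w : 'cV_k2, w != 0 -> 0 <= rayleigh Db w <= gDmax.
Hypothesis RR_lb : forall w : 'cV_k2, w != 0 -> gRmin <= rayleigh (Rm *m Rm^T) w.
Hypothesis S_ub : forall w : 'cV_k2, w != 0 -> rayleigh (Db + Rm *m Rm^T) w <= gSmax.
Hypothesis Eb_lb : forall w : 'cV_k3, w != 0 -> gEmin <= rayleigh Eb w.
Hypothesis X_ub : forall w : 'cV_k3, w != 0 -> rayleigh (Eb + Km *m Km^T) w <= gXmax.
Hypotheses (gA_1 : gAmin <= 1 <= gAmax) (gRmin_ge0 : 0 <= gRmin).

Let Ab_sym : Ab^T = Ab. Proof. by case: Ab_spd. Qed.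

Lemma lower_region_definite l : l < gAmin -> l * (gAmax + gRmin + gDmax) < gRmin ->
  spd (Ab - l%:M) /\ spd (- shifted_schur Ab Rm Db l).
Proof.
move=> l_lt l_rho; have [gAmin_le1 _] := andP gA_1.
have M_spd : spd (Ab - l%:M).
  apply: spd_rayleigh => [|w w_neq0]; first by rewrite linearB /= tr_scalar_mx Ab_sym.
  by rewrite rayleigh_shift // subr_gt0; case/andP: (Ab_bounds w_neq0) => + _; lra.
split=> //; apply: spd_rayleigh => [|w w_neq0]; first by rewrite linearN /= shifted_schur_sym.
have z_neq0 : Rm^T *m w != 0 by rewrite tr_row_free_mul_eq0.
have [w1 w1_neq0 w1_inv] := rayleigh_inv (or_introl M_spd) z_neq0.
rewrite rayleighN rayleigh_shifted_schur // oppr_gt0.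
rewrite rayleigh_shift // in w1_inv.
exact: (shifted_schur_value_lt0 (Ab_bounds w1_neq0) (RR_lb w_neq0) (rayleigh_gram_ge0 _ _)
  (Db_bounds w_neq0) gAmin_le1 l_lt l_rho w1_inv).
Qed.

Lemma upper_region_definite l : 0 <= gSmax -> gAmax + gSmax < l ->
  spd (- (Ab - l%:M)) /\ spd (shifted_schur Ab Rm Db l).
Proof.
move=> gS_ge0 l_gt; have [_ gAmax_ge1] := andP gA_1.
have M_neg : spd (- (Ab - l%:M)).
  apply: spd_rayleigh => [|w w_neq0]; first by rewrite !linearN linearB /= tr_scalar_mx Ab_sym.
  by rewrite rayleighN rayleigh_shift // oppr_gt0 subr_lt0; case/andP: (Ab_bounds w_neq0) => _; lra.
split=> //; apply: spd_rayleigh => [|w w_neq0]; first exact: shifted_schur_sym.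
have z_neq0 : Rm^T *m w != 0 by rewrite tr_row_free_mul_eq0.
have [w1 w1_neq0 w1_inv] := rayleigh_inv (or_intror M_neg) z_neq0.
have [gD_ge0 _] := andP (Db_bounds w_neq0).
rewrite rayleigh_shifted_schur //.
rewrite rayleigh_shift // in w1_inv.
have [_ gA_le] := andP (Ab_bounds w1_neq0).
have gS_le : rayleigh (Rm *m Rm^T) w + rayleigh Db w <= gSmax by rewrite addrC -rayleighD S_ub.
exact: (shifted_schur_value_gt0 gA_le gAmax_ge1 (rayleigh_gram_ge0 _ _) gD_ge0 gS_le l_gt w1_inv).
Qed.

Lemma shifted_definite_outside l :
  ~ (Num.min gAmin (gRmin / (gAmax + gRmin + gDmax)) <= l <= gAmax + gSmax) ->
  [/\ definite (Ab - l%:M), definite (shifted_schur Ab Rm Db l)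
     & spd (- shifted_schur Ab Rm Db l) /\ l < 1 \/ gAmin <= l].
Proof.
move=> l_out; have [gAmin_le1 gAmax_ge1] := andP gA_1.
have [w0 w0_neq0] := cV_neq0_exists R k2_gt0.
have [gD_ge0 gD_le] := andP (Db_bounds w0_neq0).
have den_gt0 : 0 < gAmax + gRmin + gDmax.
  exact: ltr_wpDr (le_trans gD_ge0 gD_le) (ltr_wpDr gRmin_ge0 (lt_le_trans ltr01 gAmax_ge1)).
have [l_lt|l_ge] := ltP l (Num.min gAmin (gRmin / (gAmax + gRmin + gDmax))).
  move: l_lt; rewrite lt_min ltr_pdivlMr // => /andP[l_lt l_rho].
  have [M_spd N_neg] := lower_region_definite l_lt l_rho.
  by split; [left | right | left; split => //; lra].
have gS_ge0 : 0 <= gSmax.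
  by apply: le_trans (S_ub w0_neq0); rewrite rayleighD addr_ge0 ?rayleigh_gram_ge0.
have l_gt : gAmax + gSmax < l.
  by rewrite ltNge; apply/negP => l_le; apply: l_out; rewrite l_ge l_le.
have [M_neg N_spd] := upper_region_definite gS_ge0 l_gt.
by split; [right | left | right; lra].
Qed.

Theorem scaled_eigenvalue_bounds l (a : 'cV[R]_k1) (b : 'cV[R]_k2) (c : 'cV[R]_k3) :
  Ab *m a + Rm^T *m b = l *: (a + Rm^T *m b) ->
  Rm *m a - Db *m b + Km^T *m c = l *: (- b + Km^T *m c) ->
  Km *m b + Eb *m c = l *: c ->
  (a != 0) || (b != 0) || (c != 0) ->
  ~ (Num.min gAmin (gRmin / (gAmax + gRmin + gDmax)) <= l <= gAmax + gSmax) ->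
  exists (w1 : 'cV_k1) (w2 : 'cV_k2) (w3 : 'cV_k3), [/\ w1 != 0, w2 != 0 & w3 != 0] /\
    cubic_char l (rayleigh Ab w1) (rayleigh (Rm *m Rm^T) w2) (rayleigh Db w2)
      (rayleigh (Km *m Km^T) w3) (rayleigh Eb w3) = 0 /\
    Num.min gEmin (Num.min gAmin (gRmin / (gAmax + gRmin + gDmax))) <= l
      <= gAmax + gSmax + gXmax.
Proof.
move=> eq_a eq_b eq_c abc_neq0 /shifted_definite_outside [M_def N_def l_ge].
have [w1 [w2 [w1_neq0 w2_neq0 root]]] :=
  shifted_cubic_root M_def N_def k2_gt0 Rm_free eq_a eq_b eq_c abc_neq0.
have c_neq0 := shifted_c_neq0 M_def N_def eq_a eq_b abc_neq0.
exists w1, w2, c; split=> //; split=> //; apply/andP; split.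
  case: l_ge => [[N_neg l_lt1]|gA_le]; last by rewrite !ge_min gA_le orbT.
  have := shifted_E_le M_def N_def eq_a eq_b eq_c abc_neq0 N_neg l_lt1.
  by rewrite !ge_min => /(le_trans (Eb_lb c_neq0)) ->.
apply: le_trans (cubic_char_root_le _ _ _ _ _ root) _.
- by rewrite ltW // spd_rayleigh_gt0.
- exact: rayleigh_gram_ge0.
- by case/andP: (Db_bounds w2_neq0).
- exact: rayleigh_gram_ge0.
- exact: spd_rayleigh_ge0.
have := S_ub w2_neq0; have := X_ub c_neq0; case/andP: (Ab_bounds w1_neq0) => _.
by rewrite !rayleighD; lra.
Qed.

End ScaledProblem.

Lemma calP_unit (R : realType) n m p (Ah : 'M[R]_n) (B : 'M[R]_(m, n)) (C : 'M[R]_(p, m))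
    (Sh : 'M[R]_m) (Xh : 'M[R]_p) :
  Ah \in unitmx -> Sh \in unitmx -> Xh \in unitmx -> calP Ah B C Sh Xh \in unitmx.
Proof.
move=> Ah_unit Sh_unit Xh_unit; rewrite unitmxE /calP !det_ublock !unitrM -!unitmxE.
by rewrite Ah_unit -scaleN1r unitmxZ ?unitrN1 // Sh_unit Xh_unit.
Qed.

Lemma calA_calP_scaled_system (R : realType) n m p (A : 'M[R]_n) (B : 'M[R]_(m, n))
    (C : 'M[R]_(p, m)) (D : 'M[R]_m) (E : 'M[R]_p) (Ah : 'M[R]_n) (Sh : 'M[R]_m) (Xh : 'M[R]_p)
    (Ahi : 'M[R]_n) (Shi : 'M[R]_m) (Xhi : 'M[R]_p) l :
  is_inv_sqrt Ah Ahi -> is_inv_sqrt Sh Shi -> is_inv_sqrt Xh Xhi ->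
  eigenvalue (calA A B C D E *m invmx (calP Ah B C Sh Xh)) l ->
  let Rm := Shi *m B *m Ahi in let Km := Xhi *m C *m Shi in
  exists (a : 'cV_n) (b : 'cV_m) (c : 'cV_p),
  [/\ Ahi *m A *m Ahi *m a + Rm^T *m b = l *: (a + Rm^T *m b),
    Rm *m a - Shi *m D *m Shi *m b + Km^T *m c = l *: (- b + Km^T *m c),
    Km *m b + Xhi *m E *m Xhi *m c = l *: c & (a != 0) || (b != 0) || (c != 0)].
Proof.
move=> /inv_sqrtP [Ahi_sym Ahi_unit Ah_unit AhiI] /inv_sqrtP [Shi_sym Shi_unit Sh_unit ShiI].
move=> /inv_sqrtP [Xhi_sym Xhi_unit Xh_unit XhiI].
case/eigenvalue_mul_invmx => [|x x_neq0]; first exact: calP_unit.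
pose a := invmx Ahi *m usubmx (usubmx x); pose b := invmx Shi *m dsubmx (usubmx x).
pose c := invmx Xhi *m dsubmx x.
have x_abc : x = col_mx (col_mx (Ahi *m a) (Shi *m b)) (Xhi *m c) by rewrite !mulKVmx // !vsubmxK.
clearbody a b c; rewrite x_abc /calA /calP !mul_block_col !mul_row_col !mul_col_mx !mul0mx.
rewrite !add_col_mx !add0r !addr0 !scale_col_mx => /eq_col_mx [/eq_col_mx [eq_u eq_v] eq_z].
set Rm := Shi *m B *m Ahi; set Km := Xhi *m C *m Shi.
have RmT : Rm^T = Ahi *m B^T *m Shi by rewrite !trmx_mul Ahi_sym Shi_sym mulmxA.
have KmT : Km^T = Shi *m C^T *m Xhi by rewrite !trmx_mul Xhi_sym Shi_sym mulmxA.
exists a, b, c; split.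
- move/(congr1 (mulmx Ahi)): eq_u.
  by rewrite !mulmxDr -!scalemxAr !mulmxDr !mulmxA AhiI mul1mx RmT.
- move/(congr1 (mulmx Shi)): eq_v.
  by rewrite !mulNmx !mulmxDr -!scalemxAr !mulmxDr !mulmxN !mulmxA ShiI mul1mx KmT.
- move/(congr1 (mulmx Xhi)): eq_z.
  by rewrite !mulmxDr -!scalemxAr !mulmxA XhiI mul1mx.
apply: contraTT x_neq0; rewrite !negb_or !negbK => /andP[/andP[/eqP a0 /eqP b0] /eqP c0].
by rewrite x_abc a0 b0 c0 !mulmx0 !col_mx0.
Qed.

Theorem theorem2 (R : realType) (n m p : nat)
  (A : 'M[R]_n) (B : 'M[R]_(m, n)) (C : 'M[R]_(p, m)) (D : 'M[R]_m) (E : 'M[R]_p)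
  (Ah : 'M[R]_n) (Sh : 'M[R]_m) (Xh : 'M[R]_p)
  (Ahi : 'M[R]_n) (Shi : 'M[R]_m) (Xhi : 'M[R]_p)
  (gAmin gAmax gSmax gXmax gDmax gEmin gRmin lambda : R) :
  (0 < n)%N -> (0 < m)%N -> (0 < p)%N -> (m <= n)%N -> (p <= n)%N ->
  spd A -> spd E -> \rank B = m -> \rank C = minn p m -> spsd D ->
  spd Ah -> spd Sh -> spd Xh ->
  is_inv_sqrt Ah Ahi -> is_inv_sqrt Sh Shi -> is_inv_sqrt Xh Xhi ->
  is_lambda_min (invmx Ah *m A) gAmin ->
  is_lambda_max (invmx Ah *m A) gAmax ->
  is_lambda_max (invmx Sh *m (D + B *m invmx Ah *m B^T)) gSmax ->
  is_lambda_max (invmx Xh *m (E + C *m invmx Sh *m C^T)) gXmax ->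
  is_lambda_max (invmx Sh *m D) gDmax ->
  is_lambda_min (invmx Xh *m E) gEmin ->
  is_lambda_min ((Shi *m B *m Ahi) *m (Shi *m B *m Ahi)^T) gRmin ->
  gAmin <= 1 <= gAmax ->
  eigenvalue (calA A B C D E *m invmx (calP Ah B C Sh Xh)) lambda ->
  ~ (Num.min gAmin (gRmin / (gAmax + gRmin + gDmax)) <= lambda <= gAmax + gSmax) ->
  exists (w1 : 'cV[R]_n) (w2 : 'cV[R]_m) (w3 : 'cV[R]_p),
    [/\ w1 != 0, w2 != 0 & w3 != 0] /\
    let Abar := Ahi *m A *m Ahi in
    let Dbar := Shi *m D *m Shi in
    let Ebar := Xhi *m E *m Xhi in
    let Rm := Shi *m B *m Ahi in
    let Km := Xhi *m C *m Shi in
    let gA := rayleigh Abar w1 in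
    let gR := rayleigh (Rm *m Rm^T) w2 in
    let gD := rayleigh Dbar w2 in
    let gK := rayleigh (Km *m Km^T) w3 in
    let gE := rayleigh Ebar w3 in
    let gS := gR + gD in
    let gX := gK + gE in
    lambda ^+ 3 - (gA + gS + gX) * lambda ^+ 2
      + (gA * gX + gK + gE * gS + gD * gA + gR) * lambda
      - (gA * gK + gE * gA * gD + gE * gR) = 0 /\
    Num.min gEmin (Num.min gAmin (gRmin / (gAmax + gRmin + gDmax))) <= lambda
      <= gAmax + gSmax + gXmax.
Proof.
move=> _ m_gt0 _ _ _ A_spd E_spd rB _ D_spsd [Ah_sym _] [Sh_sym _] _ HA HS HX
  minA maxA maxS maxX maxD minE [gR_eig minR] gA_1 eig l_out.
have [Ahi_sym Ahi_unit _ _] := inv_sqrtP HA.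
have [Shi_sym Shi_unit _ _] := inv_sqrtP HS.
have [Xhi_sym Xhi_unit _ _] := inv_sqrtP HX.
have [a [b [c [eq_a eq_b eq_c abc_neq0]]]] := calA_calP_scaled_system HA HS HX eig.
have B_free : row_free B by rewrite /row_free rB.
apply: (scaled_eigenvalue_bounds (spd_congr Ahi_sym Ahi_unit A_spd)
  (spd_congr Xhi_sym Xhi_unit E_spd) (sym_congr Shi_sym D_spsd.1) m_gt0
  (row_free_unit_mul Shi_unit Ahi_unit B_free) _ _ _ _ _ _ gA_1 _ eq_a eq_b eq_c abc_neq0 l_out).
- move=> w w_neq0.
  by rewrite (inv_sqrt_rayleigh_ge HA) ?(inv_sqrt_rayleigh_le HA) //; case: A_spd.
- move=> w w_neq0.
  by rewrite spsd_congr_rayleigh_ge0 ?(inv_sqrt_rayleigh_le HS) //; case: D_spsd.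
- by move=> w; apply: rayleigh_ge_eigen minR; rewrite trmx_mul trmxK.
- by move=> w; apply: (inv_sqrt_schur_rayleigh_le HS HA) maxS; case: D_spsd.
- by move=> w; apply: (inv_sqrt_rayleigh_ge HX) minE; case: E_spd.
- by move=> w; apply: (inv_sqrt_schur_rayleigh_le HX HS) maxX; case: E_spd.
- exact: eigenvalue_gram_ge0 gR_eig.
Qed.
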